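(* Let $0<T<\infty$, $\Delta=(0,T]$, and let $F$ be a distribution on $[0,\infty)$ belonging to $\mathcal L_\Delta$. Assume there exist $c>0$ and $x_0<\infty$ such that $F(x+t+\Delta)\ge cF(x+\Delta)$ for all $t\in(0,x]$ and all $x>x_0$. Then $F\in\mathcal S_\Delta$.
   Context: $x+\Delta=(x,x+T]$. $F\in\mathcal L_\Delta$ means $F(x+\Delta)>0$ for all large $x$ and $F(x+t+\Delta)/F(x+\Delta)\to1$ as $x\to\infty$ uniformly in $t\in[0,1]$. A distribution $F$ on $[0,\infty)$ with unbounded support is in $\mathcal S_\Delta$ if $F\in\mathcal L_\Delta$ and $(F*F)(x+\Delta)\sim2F(x+\Delta)$ as $x\to\infty$. *)

From Stdlib Require Import Reals Lra ClassicalEpsilon.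
Open Scope R_scope.

(** A distribution on [0,oo) is represented by its distribution function
    G x = F([0,x]) (equivalently F((-oo,x])). *)
Definition is_distr0 (G : R -> R) : Prop :=
  (forall x y, x <= y -> G x <= G y) /\
  (forall x eps, 0 < eps -> exists d, 0 < d /\ forall y, x <= y < x + d -> Rabs (G y - G x) < eps) /\
  (forall x, x < 0 -> G x = 0) /\
  (forall eps, 0 < eps -> exists M, forall x, M <= x -> Rabs (G x - 1) < eps).

Definition Fint (G : R -> R) (T x : R) : R := G (x + T) - G x.

(** Classical limit of a real sequence (meaningful when it converges). *)
Definition lim_seq (u : nat -> R) : R :=
  epsilon (inhabits 0) (fun l => Un_cv u l).

(** Left-tagged Lebesgue-Stieltjes sums of  u |-> G (y - u)  against dG on
    the uniform partition of [-1, y+1] into n+1 cells. Since u |-> G(y-u) is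
    bounded, nonincreasing and left-continuous, these sums converge
    (dominated convergence) to  \int G(y-u) dG(u) = (F*F)([0,y]). *)
Definition conv_sum (G : R -> R) (y : R) (n : nat) : R :=
  let h := (y + 2) / INR (S n) in
  sum_f_R0 (fun k => G (y - (-1 + INR k * h)) *
                     (G (-1 + INR (S k) * h) - G (-1 + INR k * h))) n.

Definition conv_cdf (G : R -> R) (y : R) : R := lim_seq (conv_sum G y).

Definition ConvInt (G : R -> R) (T x : R) : R :=
  conv_cdf G (x + T) - conv_cdf G x.

Definition in_L_Delta (T : R) (G : R -> R) : Prop :=
  (exists x1, forall x, x1 <= x -> 0 < Fint G T x) /\
  (forall eps, 0 < eps -> exists M, forall x t, M <= x -> 0 <= t <= 1 ->
      Rabs (Fint G T (x + t) / Fint G T x - 1) < eps).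

Definition in_S_Delta (T : R) (G : R -> R) : Prop :=
  (forall M, G M < 1) /\
  in_L_Delta T G /\
  (forall eps, 0 < eps -> exists M, forall x, M <= x ->
      Rabs (ConvInt G T x / Fint G T x - 2) < eps).

(* Split (F*F)(x+Delta) according to whether some summand is at most x/2.
   By symmetry the first part is 2 \int_{a <= x/2} F(x-a+Delta) dF(a).  For
   a <= K the integrand is ~ F(x+Delta) uniformly in a, by long-tailedness; for
   K < a <= x/2 the hypothesis gives F(x-a+Delta) <= F(x+Delta)/c, so that piece
   is at most F(x+Delta) F(K,x/2]/c, small for large K.  The part where both
   summands exceed x/2 is at most F(x/2+Delta)^2 <= F(x/2+Delta) F(x+Delta)/c,
   and F(x/2+Delta) -> 0.  Hence (F*F)(x+Delta) ~ 2 F(x+Delta).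
   (F*F)[0,y] is computed as a mass of the product of the Lebesgue-Stieltjes
   measure of G with itself; these masses squeeze the sums [conv_sum]. *)

From Stdlib Require Import Reals Lra ClassicalEpsilon.
Open Scope R_scope.

Lemma Bernoulli_ineq (e : R) (N : nat) : 0 <= e <= 1 -> 1 - INR N * e <= (1 - e) ^ N.
Proof.
intros He; induction N as [|N IH]; [simpl; lra|].
rewrite S_INR; simpl.
assert (0 <= INR N) by apply pos_INR.
assert (0 <= (1 - e) ^ N) by (apply pow_le; lra).
nra.
Qed.

Lemma ratio_near1_bounds (a b e : R) : 0 < b -> Rabs (a / b - 1) < e ->
  (1 - e) * b < a < (1 + e) * b.
Proof.
intros b0 H; apply Rabs_def2 in H.
assert (E : a = (a / b) * b) by (field; lra).
split; rewrite E; nra.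
Qed.

Lemma distr_le1 (G : R -> R) : is_distr0 G -> forall x, G x <= 1.
Proof.
intros [mono [_ [_ lim]]] x.
destruct (Rle_dec (G x) 1) as [h|h]; [exact h|].
destruct (lim (G x - 1)) as [M HM]; [lra|].
pose proof (HM (Rmax M x) (Rmax_l M x)) as H1.
pose proof (mono x (Rmax M x) (Rmax_r M x)) as H2.
apply Rabs_def2 in H1; lra.
Qed.

Lemma distr_tail_small (G : R -> R) : is_distr0 G ->
  forall d, 0 < d -> exists K, 0 <= K /\ forall y, K <= y -> 1 - d < G y.
Proof.
intros HG d d0; destruct HG as [_ [_ [_ lim]]].
destruct (lim d d0) as [M HM].
exists (Rmax M 0); split; [apply Rmax_r|].
intros y Hy; pose proof (HM y (Rle_trans _ _ _ (Rmax_l M 0) Hy)) as h.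
apply Rabs_def2 in h; lra.
Qed.

Section LongTailed.
Variables (G : R -> R) (T : R).
Hypothesis G_mono : forall x y, x <= y -> G x <= G y.
Hypothesis T_ge0 : 0 <= T.

Lemma Fint_ge0 x : 0 <= Fint G T x.
Proof. unfold Fint; pose proof (G_mono x (x + T)); lra. Qed.

Lemma Fint_back_shift (e M : R) : 0 <= e <= 1 ->
  (forall x, M <= x -> 0 < Fint G T x) ->
  (forall x t, M <= x -> 0 <= t <= 1 -> Rabs (Fint G T (x + t) / Fint G T x - 1) < e) ->
  forall (j : nat) x s, M + INR j <= x -> 0 <= s <= INR j ->
    (1 - e) ^ j * Fint G T x <= Fint G T (x - s) /\
    (1 - e) ^ j * Fint G T (x - s) <= Fint G T x.
Proof.
intros He Hpos HL j; induction j as [|j IH]; intros x s Hx Hs.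
- simpl in Hs |- *. replace s with 0 by lra. replace (x - 0) with x by ring. lra.
- rewrite S_INR in Hx, Hs.
  assert (0 <= (1 - e) ^ j) by (apply pow_le; lra).
  pose proof (Fint_ge0 x); pose proof (Fint_ge0 (x - s)).
  simpl.
  destruct (Rle_dec s (INR j)) as [hs|hs].
  + destruct (IH x s) as [h1 h2]; [lra|lra|].
    split; nra.
  + (* one step of length [s - j <= 1] from [x - s], then [j] steps *)
    assert (Fy : 0 < Fint G T (x - s)) by (apply Hpos; lra).
    pose proof (HL (x - s) (s - INR j) ltac:(lra) ltac:(lra)) as Hr.
    replace (x - s + (s - INR j)) with (x - INR j) in Hr by ring.
    destruct (ratio_near1_bounds _ _ _ Fy Hr) as [q1 q2].
    destruct (IH x (INR j)) as [h1 h2]; [lra|pose proof (pos_INR j); lra|].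
    split; nra.
Qed.

Lemma Fint_uniform_shift : in_L_Delta T G ->
  forall K d, 0 <= K -> 0 < d <= 1 ->
  exists M, forall x, M <= x -> forall a, -1 < a <= K ->
    (1 - d) * Fint G T x <= Fint G T (x - a) <= (1 + d) * Fint G T x.
Proof.
intros [[x1 Hpos] HL] K d K0 Hd.
destruct (INR_unbounded K) as [N HN].
assert (HN0 : 0 <= INR N) by apply pos_INR.
set (eta := d / (2 * (INR N + 1))).
assert (Heta : eta * (2 * (INR N + 1)) = d) by (unfold eta; field; lra).
assert (eta0 : 0 < eta) by (unfold eta; apply Rdiv_lt_0_compat; lra).
destruct (HL eta eta0) as [M0 HM0].
set (Mb := Rmax M0 x1).
assert (HL' : forall x t, Mb <= x -> 0 <= t <= 1 ->
   Rabs (Fint G T (x + t) / Fint G T x - 1) < eta).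
{ intros x t hx ht; apply HM0; [pose proof (Rmax_l M0 x1); unfold Mb in hx; lra|exact ht]. }
assert (Hpos' : forall x, Mb <= x -> 0 < Fint G T x).
{ intros x hx; apply Hpos; pose proof (Rmax_r M0 x1); unfold Mb in hx; lra. }
exists (Mb + INR N + 1); intros x Hx a Ha.
assert (Fx : 0 < Fint G T x) by (apply Hpos'; lra).
destruct (Rle_dec a 0) as [ha|ha].
- pose proof (HL' x (- a) ltac:(lra) ltac:(lra)) as Hr.
  replace (x + - a) with (x - a) in Hr by ring.
  destruct (ratio_near1_bounds _ _ _ Fx Hr); split; nra.
- destruct (Fint_back_shift eta Mb ltac:(nra) Hpos' HL' N x a ltac:(lra) ltac:(lra))
    as [b1 b2].
  assert (Bn : 1 - d / 2 <= (1 - eta) ^ N)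
    by (pose proof (Bernoulli_ineq eta N ltac:(nra)); nra).
  pose proof (Fint_ge0 (x - a)); split; nra.
Qed.

End LongTailed.

(* Since [Lf] will be [y |-> (F*F)([0,y])], this says: the part of (F*F)(x+Delta)
   where one summand is at most x/2 is twice  \int_{a <= x/2} F(x-a+Delta) dF(a),
   and the part where both exceed x/2 is at most F(x/2+Delta)^2. *)
Definition half_split_bounds (G Lf : R -> R) (T : R) : Prop :=
  forall x K lo hi1 hi2, 0 <= x -> 0 <= K <= x / 2 -> 0 <= lo -> 0 <= hi1 -> 0 <= hi2 ->
    (forall a, -1 < a <= K -> lo <= Fint G T (x - a) <= hi1) ->
    (forall a, K < a <= x / 2 -> Fint G T (x - a) <= hi2) ->
    2 * lo * G K <= Lf (x + T) - Lf x <=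
      2 * (hi1 * G K + hi2 * (G (x / 2) - G K)) + Fint G T (x / 2) ^ 2.

Lemma Fint_le_div (T : R) (G : R -> R) (c x0 : R) : 0 < c ->
  (forall x t, x0 < x -> 0 < t <= x -> Fint G T (x + t) >= c * Fint G T x) ->
  forall x a, x0 < x - a -> 0 < a <= x - a -> Fint G T (x - a) <= Fint G T x / c.
Proof.
intros c0 Hc x a h1 h2; pose proof (Hc (x - a) a h1 h2) as h.
replace (x - a + a) with x in h by ring.
apply (Rmult_le_reg_l c); [lra|].
replace (c * (Fint G T x / c)) with (Fint G T x) by (field; lra); lra.
Qed.

Lemma half_split_ratio_near2 (D Fx F2 gK gh c d eps : R) :
  0 < Fx -> 0 < c -> 0 < eps -> 0 <= d <= 1/2 -> d <= eps / 8 -> d <= eps * c / 8 ->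
  1 - d < gK <= 1 -> 0 <= gh - gK <= d -> F2 ^ 2 <= d * (Fx / c) ->
  2 * ((1 - d) * Fx) * gK <= D <=
    2 * ((1 + d) * Fx * gK + Fx / c * (gh - gK)) + F2 ^ 2 ->
  Rabs (D / Fx - 2) < eps.
Proof.
intros Fx0 c0 eps0 d0 d1 d2 gK0 gh0 F2sq [lo up].
assert (dc : d / c <= eps / 8).
{ apply (Rmult_le_reg_l c); [lra|]. field_simplify; lra. }
assert (Fxc : 0 <= Fx / c).
{ unfold Rdiv; apply Rmult_le_pos; [lra|left; apply Rinv_0_lt_compat; lra]. }
assert (Fx / c * (gh - gK) <= Fx / c * d) by (apply Rmult_le_compat_l; lra).
assert ((1 + d) * Fx * gK <= (1 + d) * Fx)
  by (rewrite <- (Rmult_1_r ((1 + d) * Fx)) at 2; apply Rmult_le_compat_l; nra).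
assert ((1 - d) * Fx * (1 - d) <= (1 - d) * Fx * gK) by (apply Rmult_le_compat_l; nra).
replace (Fx / c * d) with (d / c * Fx) in * by (field; lra).
replace (D / Fx - 2) with ((D - 2 * Fx) / Fx) by (field; lra).
apply Rabs_def1;
  [apply (Rmult_lt_reg_r Fx); [lra|] | apply (Rmult_lt_reg_r Fx); [lra|]];
  unfold Rdiv; rewrite Rmult_assoc, Rinv_l by lra; nra.
Qed.

Lemma half_split_increment_asymptotic {T : R} {G : R -> R} (Lf : R -> R) {c x0 : R} :
  0 < T -> is_distr0 G -> in_L_Delta T G -> 0 < c ->
  (forall x t, x0 < x -> 0 < t <= x -> Fint G T (x + t) >= c * Fint G T x) ->
  half_split_bounds G Lf T ->
  forall eps, 0 < eps -> exists M, forall x, M <= x ->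
    Rabs ((Lf (x + T) - Lf x) / Fint G T x - 2) < eps.
Proof.
intros T0 HG HL c0 Hc Hb eps eps0.
assert (mono : forall x y, x <= y -> G x <= G y) by apply HG.
pose proof (distr_le1 G HG) as G1.
pose proof (Fint_le_div T G c x0 c0 Hc) as Fint_far.
set (d := Rmin (1/2) (Rmin (eps/8) (eps*c/8))).
assert (d0 : 0 < d) by (unfold d; repeat apply Rmin_pos; nra).
assert (d1 : d <= 1/2) by apply Rmin_l.
assert (d2 : d <= eps / 8) by (unfold d; eapply Rle_trans; [apply Rmin_r|apply Rmin_l]).
assert (d3 : d <= eps * c / 8) by (unfold d; eapply Rle_trans; [apply Rmin_r|apply Rmin_r]).
destruct (distr_tail_small G HG d d0) as [K [K0 HK]].
destruct (Fint_uniform_shift G T mono ltac:(lra) HL K d K0 ltac:(lra)) as [M2 HM2].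
destruct HL as [[x1 Hpos] _].
exists (Rmax (Rmax M2 x1) (2 * Rmax K (Rabs x0 + 1))); intros x Hx.
pose proof (Rmax_l (Rmax M2 x1) (2 * Rmax K (Rabs x0 + 1))).
pose proof (Rmax_r (Rmax M2 x1) (2 * Rmax K (Rabs x0 + 1))).
pose proof (Rmax_l M2 x1); pose proof (Rmax_r M2 x1).
pose proof (Rmax_l K (Rabs x0 + 1)); pose proof (Rmax_r K (Rabs x0 + 1)).
pose proof (Rle_abs x0); pose proof (Rabs_pos x0).
assert (Fx0 : 0 < Fint G T x) by (apply Hpos; lra).
assert (F2sq : Fint G T (x / 2) ^ 2 <= d * (Fint G T x / c)).
{ assert (Fint G T (x / 2) <= Fint G T x / c).
  { replace (x / 2) with (x - x / 2) at 1 by field; apply Fint_far; lra. }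
  assert (Fint G T (x / 2) <= d)
    by (unfold Fint; pose proof (HK (x / 2)); pose proof (G1 (x / 2 + T)); lra).
  pose proof (Fint_ge0 G T mono ltac:(lra) (x / 2)).
  simpl; rewrite Rmult_1_r; apply Rmult_le_compat; lra. }
apply (half_split_ratio_near2 _ _ (Fint G T (x / 2)) (G K) (G (x / 2)) c d);
  try lra.
- pose proof (HK K (Rle_refl K)); pose proof (G1 K); lra.
- pose proof (HK K (Rle_refl K)); pose proof (G1 (x / 2)); pose proof (mono K (x / 2)); lra.
- apply Hb; try lra; try nra.
  + intros a Ha; apply HM2; lra.
  + intros a Ha; apply Fint_far; lra.
Qed.

Lemma L_Delta_unbounded_support (T : R) (G : R -> R) :
  is_distr0 G -> in_L_Delta T G -> forall M, G M < 1.
Proof.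
intros HG [[x1 Hpos] _] M.
pose proof (Hpos (Rmax M x1) (Rmax_r M x1)) as h1; unfold Fint in h1.
pose proof (proj1 HG M (Rmax M x1) (Rmax_l M x1)).
pose proof (distr_le1 G HG (Rmax M x1 + T)); lra.
Qed.

From HB Require Import structures.
From mathcomp Require Import all_boot all_order all_algebra.
From mathcomp Require Import all_classical all_reals all_analysis.
From mathcomp Require Import measurable_realfun lra ring.
From mathcomp Require Import Rstruct Rstruct_topology.
Set Implicit Arguments.
Unset Strict Implicit.
Unset Printing Implicit Defensive.
Import Order.TTheory GRing.Theory Num.Theory.
Import numFieldNormedType.Exports.
Import numFieldTopology.Exports.
HB.instance Definition _ := Order_isNbhs.Build _ R (@real_order_nbhsE R).
HB.instance Definition _ := Pointed.on R.
HB.instance Definition _ := PseudoMetricNormedZmod.copy R R^o.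
HB.instance Definition _ : isMeasurable default_measure_display R :=
  @isMeasurable.Build _ (measurableTypeR R) (@measurableR R)
    measurable0 (@measurableC _ _) (@bigcupT_measurable _ _).
Local Open Scope classical_set_scope.
Local Close Scope R_scope.
Local Open Scope ring_scope.
Bind Scope ring_scope with R.

Lemma IZR_neg1 : IZR (Zneg xH) = -1 :> R.
Proof. by rewrite /IZR /IPR. Qed.

Lemma IZR_2 : IZR (Zpos (xO xH)) = 2 :> R.
Proof. by rewrite IZRposE INRE. Qed.

Lemma sum_f_R0_big (f : nat -> R) n : sum_f_R0 f n = \sum_(k < n.+1) f k.
Proof.
elim: n => [|n IH]; first by rewrite big_ord_recr big_ord0 /= add0r.
by rewrite /= IH [in RHS]big_ord_recr.
Qed.

(* Half-open intervals as plain sets: membership unfolds to a conjunction that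
   [lra] uses directly. *)
Definition oc (a b : R) : set R := [set x | a < x /\ x <= b].

Lemma ocE a b : oc a b = `]a, b]%classic.
Proof.
apply/seteqP; split => x /=; rewrite /oc /= in_itv /=; first by move=> [-> ->].
by move=> /andP[-> ->].
Qed.

Lemma measurable_oc a b : measurable (oc a b).
Proof. by rewrite ocE; exact: measurable_itv. Qed.

Lemma measurable_gt (a : R) : measurable [set x : R | a < x].
Proof.
have -> : [set x : R | a < x] = `]a, +oo[%classic.
  by apply/seteqP; split => x /=; rewrite in_itv /= andbT.
exact: measurable_itv.
Qed.

Lemma measurable_le (b : R) : measurable [set x : R | x <= b].
Proof.
have -> : [set x : R | x <= b] = `]-oo, b]%classic.
  by apply/seteqP; split => x /=; rewrite in_itv /=.
exact: measurable_itv.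
Qed.

Definition plane := (measurableTypeR R * measurableTypeR R)%type.

Definition sum_region (A B C : set R) : set plane :=
  [set p | A p.1 /\ B p.2 /\ C (p.1 + p.2)].

Lemma measurable_sum_region A B C : measurable A -> measurable B -> measurable C ->
  measurable (sum_region A B C).
Proof.
move=> mA mB mC.
have -> : sum_region A B C =
    fst @^-1` A `&` snd @^-1` B `&` (fun p : plane => p.1 + p.2) @^-1` C.
  by apply/seteqP; split => p /=; rewrite /sum_region /preimage /=; tauto.
have madd : measurable_fun setT (fun p : plane => p.1 + p.2).
  by apply: measurable_funD; [exact: measurable_fst|exact: measurable_snd].
apply: measurableI; [apply: measurableI|].
- by rewrite -[X in measurable X]setTI; apply: measurable_fst.
- by rewrite -[X in measurable X]setTI; apply: measurable_snd.
- by rewrite -[X in measurable X]setTI; apply: madd.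
Qed.

(* The mass of this region under F x F is (F*F)([0,y]); the bound [-1] instead of
   [0] is harmless since F has no mass on [(-1,0)]. *)
Definition conv_region (y : R) : set plane :=
  sum_region [set a | -1 < a] [set b | -1 < b] [set s | s <= y].

Definition strip (x T : R) : set plane :=
  sum_region [set a | -1 < a] [set b | -1 < b] (oc x (x + T)).
Definition strip_small2 (x T : R) : set plane :=
  sum_region [set a | -1 < a] (oc (-1) (x / 2)) (oc x (x + T)).
Definition strip_small1 (x T : R) : set plane :=
  sum_region (oc (-1) (x / 2)) [set b | x / 2 < b] (oc x (x + T)).
Definition strip_large (x T : R) : set plane :=
  sum_region [set a | x / 2 < a] [set b | x / 2 < b] (oc x (x + T)).

Lemma measurable_conv_region y : measurable (conv_region y).
Proof. by apply: measurable_sum_region; [exact: measurable_gt|exact: measurable_gt|exact: measurable_le]. Qed.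
Lemma measurable_strip x T : measurable (strip x T).
Proof. by apply: measurable_sum_region; [exact: measurable_gt|exact: measurable_gt|exact: measurable_oc]. Qed.
Lemma measurable_strip_small2 x T : measurable (strip_small2 x T).
Proof. by apply: measurable_sum_region; [exact: measurable_gt|exact: measurable_oc|exact: measurable_oc]. Qed.
Lemma measurable_strip_small1 x T : measurable (strip_small1 x T).
Proof. by apply: measurable_sum_region; [exact: measurable_oc|exact: measurable_gt|exact: measurable_oc]. Qed.
Lemma measurable_strip_large x T : measurable (strip_large x T).
Proof. by apply: measurable_sum_region; [exact: measurable_gt|exact: measurable_gt|exact: measurable_oc]. Qed.

Lemma conv_region_add x T : 0 <= T -> conv_region (x + T) = conv_region x `|` strip x T.
Proof.
move=> T0; apply/seteqP; rewrite /conv_region /strip /sum_region /oc.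
split => [[a b] /= [h1 [h2 h3]]|[a b] /= [[h1 [h2 h3]]|[h1 [h2 [h3 h4]]]]].
- by have [hs|hs] := leP (a + b) x; [left|right]; split => //; split.
- by split => //; split => //; lra.
- by split => //; split => //; lra.
Qed.

Lemma strip_split x T : 0 <= x ->
  strip x T = (strip_small2 x T `|` strip_small1 x T) `|` strip_large x T.
Proof.
move=> x0; apply/seteqP.
rewrite /strip /strip_small2 /strip_small1 /strip_large /sum_region /oc.
split => [[a b] /= [h1 [h2 h3]]|[a b] /= [[[h1 [h2 h3]]|[h1 [h2 h3]]]|[h1 [h2 h3]]]].
- have [hb|hb] := leP b (x / 2); first by left; left.
  have [ha|ha] := leP a (x / 2); first by left; right.
  by right.
- by case: h2 => h2 h2'; split.
- by case: h1 => h1 h1'; split => //; split => //=; lra.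
- by split => //=; [lra|split => //=; lra].
Qed.

Section ConvolutionMeasure.
Variable G : R -> R.
Hypothesis G_nd : nondecreasing G.
Hypothesis G_rc : right_continuous G.
Hypothesis G_neg : forall x, x < 0 -> G x = 0.

#[local] HB.instance Definition _ := isCumulative.Build R _ R G G_nd G_rc.

Local Notation mu := (lebesgue_stieltjes_measure G).
Local Notation pi := (mu \x mu)%E.

Lemma mu_oc (a b : R) : a <= b -> mu (oc a b) = (G b - G a)%:E.
Proof.
move=> ab; rewrite ocE /lebesgue_stieltjes_measure /measure_extension/=.
rewrite measurable_mu_extE/=; last exact: is_ocitv.
by rewrite wlength_itv_bnd.
Qed.

Lemma mu_oc_neg1 (b : R) : -1 <= b -> mu (oc (-1) b) = (G b)%:E.
Proof. by move=> b1; rewrite mu_oc // (G_neg (x := -1)) ?subr0 //; lra. Qed.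

Lemma pi_setX (A B : set (measurableTypeR R)) : measurable A -> measurable B ->
  pi (A `*` B) = (mu A * mu B)%E.
Proof. by move=> mA mB; rewrite product_measure1E. Qed.

Lemma pi_oc_setX a b c d : a <= b -> c <= d ->
  pi (oc a b `*` oc c d) = ((G b - G a) * (G d - G c))%:E.
Proof.
by move=> ab cd; rewrite pi_setX ?mu_oc // ?EFinM //; exact: measurable_oc.
Qed.

Lemma pi_ysectionE (X : set plane) : measurable X ->
  pi X = (\int[mu]_y mu (ysection X y))%E.
Proof.
move=> mX; rewrite (product_measure_unique (m' := (mu \x^ mu)%E)) //.
by move=> A B mA mB; apply: product_measure2E.
Qed.

Lemma pi_xsectionE (X : set plane) : pi X = (\int[mu]_x mu (xsection X x))%E.
Proof. by []. Qed.

Lemma pi_split_oc (A : set plane) (t : nat -> R) : measurable A ->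
  (forall k, t k <= t k.+1) ->
  forall m, pi (A `&` (setT `*` oc (t 0%N) (t m))) =
    (\sum_(k < m) pi (A `&` (setT `*` oc (t k) (t k.+1))))%E.
Proof.
move=> mA tnd.
have t0m m : t 0%N <= t m by elim: m => [//|m IH]; exact: le_trans IH (tnd m).
have mAoc a b : measurable (A `&` (setT `*` oc a b)).
  by apply: measurableI => //; apply: measurableX => //; exact: measurable_oc.
elim=> [|m IH].
  rewrite big_ord0 -(measure0 pi); congr (pi _).
  by apply/seteqP; split => [[x y] /= [_ [_ [h1 h2]]]|//]; lra.
rewrite big_ord_recr /= -{}IH -measureU //; last first.
  by apply/seteqP; split => [[x y] /= [[_ [_ [h1 h2]]] [_ [_ [h3 h4]]]]|//]; lra.
congr (pi _); apply/seteqP.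
have := tnd m; have := t0m m => h0 h1.
split => [[x y] /= [Ax [_ [h2 h3]]]|[x y] /= [[Ax [_ [h2 h3]]]|[Ax [_ [h2 h3]]]]].
- by have [hy|hy] := leP y (t m); [left|right].
- by split => //; split => //; rewrite /oc /=; lra.
- by split => //; split => //; rewrite /oc /=; lra.
Qed.

Lemma conv_region_le_sum (y : R) (t : nat -> R) (m : nat) :
  (forall k, t k <= t k.+1) -> t 0%N = -1 -> y + 1 <= t m ->
  (pi (conv_region y) <=
   \sum_(k < m) mu (oc (-1) (y - t k)) * mu (oc (t k) (t k.+1)))%E.
Proof.
move=> tnd t0 tm.
have -> : conv_region y = conv_region y `&` (setT `*` oc (t 0%N) (t m)).
  apply/seteqP; split => [[a b] /= [h1 [h2 h3]]|[a b] [] //].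
  by split => //; split => //; rewrite /oc /= t0; split => //=; rewrite /= in h1 h2 h3; lra.
rewrite pi_split_oc //; last exact: measurable_conv_region.
apply: lee_sum => k _.
rewrite -pi_setX; [|exact: measurable_oc|exact: measurable_oc].
apply: le_measure; rewrite ?inE.
- apply: measurableI; first exact: measurable_conv_region.
  by apply: measurableX => //; exact: measurable_oc.
- by apply: measurableX; exact: measurable_oc.
move=> [a b] /= [[h1 [h2 h3]] [_ [h4 h5]]]; split; rewrite /oc /=; split => //.
by rewrite /= in h1 h2 h3; lra.
Qed.

Lemma sum_le_conv_region (y h : R) (t : nat -> R) (m : nat) :
  (forall k, t k <= t k.+1) -> (forall k, t k.+1 <= t k + h) -> -1 <= t 0%N ->
  (\sum_(k < m) mu (oc (-1) (y - t k)) * mu (oc (t k) (t k.+1)) <=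
   pi (conv_region (y + h)))%E.
Proof.
move=> tnd th t0.
have t0k k : t 0%N <= t k by elim: k => [//|k IH]; exact: le_trans IH (tnd k).
have mC := measurable_conv_region (y + h).
apply: (@le_trans _ _ (pi (conv_region (y + h) `&` (setT `*` oc (t 0%N) (t m))))).
  rewrite pi_split_oc //; apply: lee_sum => k _.
  rewrite -pi_setX; [|exact: measurable_oc|exact: measurable_oc].
  apply: le_measure; rewrite ?inE.
  - by apply: measurableX; exact: measurable_oc.
  - by apply: measurableI => //; apply: measurableX => //; exact: measurable_oc.
  move=> [a b] /= [[h1 h2] [h3 h4]]; split; last by split.
  by have := t0k k; have := th k => *; split => //=; split; lra.
apply: le_measure; rewrite ?inE //.
by apply: measurableI => //; apply: measurableX => //; exact: measurable_oc.
Qed.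

Definition mesh (y : R) (n : nat) : R := (y + 2) / n.+1%:R.
Definition node (y : R) (n k : nat) : R := -1 + k%:R * mesh y n.
Definition stieltjes_sum (y : R) (n : nat) : R :=
  \sum_(k < n.+1) G (y - node y n k) * (G (node y n k.+1) - G (node y n k)).

Lemma mesh_ge0 y n : 0 <= y -> 0 <= mesh y n.
Proof. by move=> y0; rewrite /mesh divr_ge0 ?ler0n //; lra. Qed.

Lemma node_S y n k : node y n k.+1 = node y n k + mesh y n.
Proof. by rewrite /node -addn1 natrD; ring. Qed.

Lemma node_last y n : node y n n.+1 = y + 1.
Proof. by rewrite /node /mesh mulrC -mulrA mulVf ?mulr1 ?pnatr_eq0 //; lra. Qed.

Lemma node_le y n k : 0 <= y -> (k <= n.+1)%N -> node y n k <= y + 1.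
Proof.
move=> y0 kn; rewrite -(node_last y n) /node lerD2l ler_wpM2r ?mesh_ge0 //.
by rewrite ler_nat.
Qed.

Lemma stieltjes_sum_squeeze y n : 0 <= y ->
  (pi (conv_region y) <= (stieltjes_sum y n)%:E)%E /\
  ((stieltjes_sum y n)%:E <= pi (conv_region (y + mesh y n)))%E.
Proof.
move=> y0.
have node_nd k : node y n k <= node y n k.+1.
  by rewrite node_S; have := mesh_ge0 n y0; lra.
have -> : (stieltjes_sum y n)%:E = (\sum_(k < n.+1)
    mu (oc (-1) (y - node y n k)) * mu (oc (node y n k) (node y n k.+1)))%E.
  rewrite /stieltjes_sum -sumEFin; apply: eq_bigr => k _.
  have := node_le y0 (ltnW (ltn_ord k)) => hk.
  by rewrite mu_oc_neg1 ?mu_oc //; lra.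
split.
- by apply: conv_region_le_sum => //; rewrite ?node_last /node ?mul0r ?addr0.
- by apply: sum_le_conv_region => // [k|]; rewrite ?node_S /node ?mul0r ?addr0.
Qed.

Lemma pi_fin (A : set plane) (c : R) : measurable A ->
  A `<=` oc (-1) c `*` oc (-1) c -> pi A \is a fin_num.
Proof.
move=> mA Ac; rewrite ge0_fin_numE ?measure_ge0 //.
apply: (@le_lt_trans _ _ (pi (oc (-1) c `*` oc (-1) c))).
  apply: le_measure; rewrite ?inE //.
  by apply: measurableX; exact: measurable_oc.
have [c1|c1] := leP (-1) c; first by rewrite pi_oc_setX // ltry.
rewrite (_ : oc (-1) c `*` _ = set0) ?measure0 ?ltry //.
by apply/seteqP; split => [[a b] /= [[h1 h2] _]|//]; lra.
Qed.

Lemma conv_region_fin w : pi (conv_region w) \is a fin_num.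
Proof.
apply: (pi_fin (c := `|w| + 1)); first exact: measurable_conv_region.
move=> [a b] /= [h1 [h2 h3]]; rewrite /oc /=.
by have := ler_norm w; rewrite /= in h1 h2 h3 * => hw; split; split; lra.
Qed.

Lemma mesh_small y e : 0 <= y -> 0 < e ->
  exists N, forall n, (N <= n)%N -> mesh y n < e.
Proof.
move=> y0 e0.
have q0 : 0 <= (y + 2) / e by rewrite divr_ge0 //; lra.
exists (Num.bound ((y + 2) / e)) => n Nn.
have H := archi_boundP q0.
have H2 : ((Num.bound ((y + 2) / e))%:R <= n.+1%:R :> R) by rewrite ler_nat; apply: leqW.
rewrite /mesh ltr_pdivrMr ?ltr0n // mulrC.
rewrite ltr_pdivrMr // in H.
by apply: (lt_le_trans H); rewrite ler_pM2r.
Qed.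

Lemma mesh_nonincr y m n : 0 <= y -> (m <= n)%N -> mesh y n <= mesh y m.
Proof.
move=> y0 mn; rewrite /mesh ler_wpM2l //; first lra.
by rewrite lef_pV2 ?posrE ?ltr0n // ler_nat.
Qed.

Lemma bigcap_conv_region y : 0 <= y ->
  \bigcap_n conv_region (y + mesh y n) = conv_region y.
Proof.
move=> y0; apply/seteqP; split => [[a b] H|[a b] /= [h1 [h2 h3]] n _]; last first.
  by split => //; split => //=; have := mesh_ge0 n y0; rewrite /= in h3 *; lra.
have [h1 [h2 _]] := H 0%N I.
split => //; split => //=.
rewrite leNgt; apply/negP => hlt.
have e0 : 0 < a + b - y by rewrite subr_gt0.
have [N HN] := mesh_small y0 e0.
have [_ [_ h3]] := H N I.
by have := HN N (leqnn N); rewrite /= in h3; lra.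
Qed.

Lemma stieltjes_sum_cvg y : 0 <= y -> forall e, 0 < e ->
  exists N, forall n, (N <= n)%N ->
    `|stieltjes_sum y n - fine (pi (conv_region y))| < e.
Proof.
move=> y0 e e0.
have cv : (fun n => pi (conv_region (y + mesh y n))) @ \oo --> pi (conv_region y).
  rewrite -(bigcap_conv_region y0).
  apply: nonincreasing_cvg_mu.
  - by rewrite -ge0_fin_numE ?measure_ge0 ?conv_region_fin.
  - by move=> i; exact: measurable_conv_region.
  - by rewrite bigcap_conv_region //; exact: measurable_conv_region.
  move=> m n mn; apply/subsetPset => -[a b] /= [h1 [h2 h3]]; split => //; split => //=.
  by have := mesh_nonincr y0 mn; rewrite /= in h3 *; lra.
have finL := conv_region_fin y.
rewrite -(fineK finL) in cv.
have [_ cv'] := (fine_cvgP _ _).1 cv.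
have [N _ HN] := (cvgrPdist_lt _ _).1 cv' e e0.
exists N => n Nn; have {}HN := HN n Nn; rewrite /= distrC in HN.
have [lo up] := stieltjes_sum_squeeze n y0.
rewrite -(fineK finL) lee_fin in lo.
rewrite -(fineK (conv_region_fin (y + mesh y n))) lee_fin in up.
rewrite ger0_norm ?subr_ge0 //.
by have := ler_norm (fine (pi (conv_region (y + mesh y n))) - fine (pi (conv_region y))); lra.
Qed.

Definition conv_mass (y : R) : R := fine (pi (conv_region y)).

Lemma conv_cdf_conv_mass y : 0 <= y -> conv_cdf G y = conv_mass y.
Proof.
move=> y0.
have sumE n : conv_sum G y n = stieltjes_sum y n.
  rewrite /conv_sum sum_f_R0_big; apply: eq_bigr => k _.
  by rewrite /stieltjes_sum /node /mesh !INRE IZR_neg1 IZR_2.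
have cv : Un_cv (conv_sum G y) (conv_mass y).
  move=> e /RltP e0; have [N HN] := stieltjes_sum_cvg y0 e0.
  by exists N => n /ssrnat.leP Nn; rewrite sumE /R_dist; apply/RltP; exact: HN.
rewrite /conv_cdf /lim_seq; apply: (UL_sequence _ _ _ _ cv).
by apply: epsilon_spec; exists (conv_mass y).
Qed.

Lemma strip_small2_ysection x T a : 0 <= x ->
  ysection (strip_small2 x T) a = xsection (strip_small1 x T) a.
Proof.
move=> x0; apply/seteqP; rewrite /xsection /ysection /=; split => b /=;
  rewrite !in_setE /strip_small2 /strip_small1 /sum_region /oc /=.
- by move=> [h1 [[h2 h3] [h4 h5]]]; repeat split; lra.
- by move=> [[h1 h2] [h3 [h4 h5]]]; repeat split; lra.
Qed.

Lemma pi_strip_small2 x T : 0 <= x -> pi (strip_small2 x T) = pi (strip_small1 x T).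
Proof.
move=> x0; rewrite pi_ysectionE; last exact: measurable_strip_small2.
by apply: eq_integral => a _; rewrite strip_small2_ysection.
Qed.

Lemma mu_strip_small1_xsection x T a : 0 <= x -> 0 <= T ->
  mu (xsection (strip_small1 x T) a) =
    (if (-1 < a) && (a <= x / 2) then G (x + T - a) - G (x - a) else 0)%:E.
Proof.
move=> x0 T0; case: ifPn => ha.
  rewrite (_ : xsection _ a = oc (x - a) (x + T - a)) ?mu_oc //; first lra.
  case/andP: ha => a1 a2; apply/seteqP; rewrite /xsection /=; split => b /=;
    rewrite !in_setE /strip_small1 /sum_region /oc /=.
  - by move=> [_ [h1 [h2 h3]]]; split; lra.
  - by move=> [h1 h2]; repeat split; lra.
rewrite (_ : xsection _ a = set0) ?measure0 //.
apply/seteqP; rewrite /xsection /=; split => b //=.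
rewrite !in_setE /strip_small1 /sum_region /oc /= => -[[h1 h2] _].
by move: ha; rewrite h1 h2.
Qed.

Lemma integral_scaled_indic (A : set R) (k : R) : measurable A -> 0 <= k ->
  (\int[mu]_a (k * \1_A a)%:E = k%:E * mu A)%E.
Proof.
move=> mA k0.
rewrite (@integralZl_indic _ _ _ mu setT measurableT (fun _ => A)) //.
  by rewrite integral_indic // setIT.
by rewrite /= ltNge k0.
Qed.

Lemma measurable_scaled_indic (A : set R) (k : R) : measurable A ->
  measurable_fun setT (fun a : measurableTypeR R => (k * \1_A a)%:E).
Proof.
move=> mA; apply/measurable_EFinP; apply: measurable_funM.
  exact: measurable_cst.
exact: measurable_indic.
Qed.

Lemma indic_oc (a b z : R) : \1_(oc a b) z = (if (a < z) && (z <= b) then 1 else 0 : R).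
Proof.
rewrite indicE; case: ifPn => H; first by rewrite mem_set //; move/andP: H.
by rewrite memNset //= /oc => -[h1 h2]; move/negP: H; apply; apply/andP.
Qed.

Lemma pi_strip_small1_ge x T K lo : 0 <= x -> 0 <= T -> 0 <= K <= x / 2 -> 0 <= lo ->
  (forall a, -1 < a <= K -> lo <= G (x + T - a) - G (x - a)) ->
  ((lo * G K)%:E <= pi (strip_small1 x T))%E.
Proof.
move=> x0 T0 /andP[K0 Kx] lo0 Hlo; rewrite pi_xsectionE.
apply: (@le_trans _ _ (\int[mu]_a (lo * \1_(oc (-1) K) a)%:E)%E).
  rewrite integral_scaled_indic //; last exact: measurable_oc.
  by rewrite mu_oc_neg1 //; lra.
apply: ge0_le_integral => //.
- by move=> a _; rewrite lee_fin mulr_ge0 // indic_ge0.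
- exact: measurable_scaled_indic (measurable_oc _ _).
- exact: measurable_fun_xsection (measurable_strip_small1 x T).
move=> a _; rewrite indic_oc mu_strip_small1_xsection //.
case: ifPn => [/andP[a1 aK]|_].
  rewrite mulr1 ifT ?lee_fin; first by apply: Hlo; rewrite a1 aK.
  by rewrite a1 /=; lra.
rewrite mulr0 lee_fin; case: ifP => // _.
by rewrite subr_ge0; apply: G_nd; lra.
Qed.

Lemma pi_strip_small1_le x T K hi1 hi2 : 0 <= x -> 0 <= T -> 0 <= K <= x / 2 ->
  0 <= hi1 -> 0 <= hi2 ->
  (forall a, -1 < a <= K -> G (x + T - a) - G (x - a) <= hi1) ->
  (forall a, K < a <= x / 2 -> G (x + T - a) - G (x - a) <= hi2) ->
  (pi (strip_small1 x T) <= (hi1 * G K + hi2 * (G (x / 2) - G K))%:E)%E.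
Proof.
move=> x0 T0 /andP[K0 Kx] h10 h20 H1 H2; rewrite pi_xsectionE.
have m1 := measurable_scaled_indic hi1 (measurable_oc (-1) K).
have m2 := measurable_scaled_indic hi2 (measurable_oc K (x / 2)).
apply: (@le_trans _ _ (\int[mu]_a ((hi1 * \1_(oc (-1) K) a)%:E +
                                    (hi2 * \1_(oc K (x / 2)) a)%:E))%E).
  apply: ge0_le_integral => //.
  - exact: measurable_fun_xsection (measurable_strip_small1 x T).
  - exact: emeasurable_funD.
  move=> a _; rewrite !indic_oc mu_strip_small1_xsection //.
  case: ifPn => [/andP[a1 a2]|_]; last first.
    by apply: adde_ge0; rewrite lee_fin; apply: mulr_ge0 => //; case: ifP.
  have [aK|Ka] := leP a K.
    by rewrite a1 /= mulr1 mulr0 adde0 lee_fin; apply: H1; rewrite a1 aK.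
  by rewrite a2 /= andbF mulr0 mulr1 add0e lee_fin; apply: H2; rewrite Ka a2.
rewrite ge0_integralD //; last 2 first.
- by move=> a _; rewrite lee_fin mulr_ge0 // indic_ge0.
- by move=> a _; rewrite lee_fin mulr_ge0 // indic_ge0.
rewrite !integral_scaled_indic //; [|exact: measurable_oc|exact: measurable_oc].
by rewrite mu_oc_neg1 ?mu_oc -?EFinM -?EFinD //; lra.
Qed.

Lemma pi_strip_large_le x T : 0 <= T ->
  (pi (strip_large x T) <= ((G (x / 2 + T) - G (x / 2)) ^+ 2)%:E)%E.
Proof.
move=> T0; rewrite expr2 -pi_oc_setX ?lerDl //.
apply: le_measure; rewrite ?inE; first exact: measurable_strip_large.
  by apply: measurableX; exact: measurable_oc.
move=> [a b]; rewrite /strip_large /sum_region /oc /= => -[h1 [h2 [h3 h4]]].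
by repeat split; lra.
Qed.

Lemma pi_conv_region_add x T : 0 <= T ->
  pi (conv_region (x + T)) = (pi (conv_region x) + pi (strip x T))%E.
Proof.
move=> T0; rewrite conv_region_add //.
apply: measureU; [exact: measurable_conv_region|exact: measurable_strip|].
apply/seteqP; rewrite /conv_region /strip /sum_region /oc; split => //.
by move=> [a b] /= [[_ [_ h1]] [_ [_ [h2 _]]]]; lra.
Qed.

Lemma pi_strip_split x T : 0 <= x -> pi (strip x T) =
  (pi (strip_small2 x T) + pi (strip_small1 x T) + pi (strip_large x T))%E.
Proof.
move=> x0; rewrite strip_split //.
rewrite /strip_small2 /strip_small1 /strip_large /sum_region /oc.
rewrite measureU; first last.
- apply/seteqP; split => [[a b] /= [[[_ [[_ h] _]]|[[_ h] _]] [h1 [h2 _]]]|//]; lra.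
- exact: measurable_strip_large.
- exact: measurableU (measurable_strip_small2 x T) (measurable_strip_small1 x T).
rewrite measureU //; [exact: measurable_strip_small2|exact: measurable_strip_small1|].
by apply/seteqP; split => [[a b] /= [[_ [[_ h] _]] [_ [h' _]]]|//]; lra.
Qed.

Lemma conv_mass_increment_bounds x T K lo hi1 hi2 : 0 <= x -> 0 <= T ->
  0 <= K <= x / 2 -> 0 <= lo -> 0 <= hi1 -> 0 <= hi2 ->
  (forall a, -1 < a <= K -> lo <= G (x + T - a) - G (x - a) <= hi1) ->
  (forall a, K < a <= x / 2 -> G (x + T - a) - G (x - a) <= hi2) ->
  2 * lo * G K <= conv_mass (x + T) - conv_mass x <=
   2 * (hi1 * G K + hi2 * (G (x / 2) - G K)) + (G (x / 2 + T) - G (x / 2)) ^+ 2.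
Proof.
move=> x0 T0 Kx lo0 h10 h20 H1 H2.
have fin A : measurable A ->
    A `<=` (strip_small2 x T `|` strip_small1 x T) `|` strip_large x T ->
    pi A \is a fin_num.
  rewrite -strip_split // => mA As; apply: (pi_fin (c := x + T + 1)) => // p /As.
  by move: p => [a b]; rewrite /strip /sum_region /oc /= => -[h1 [h2 [h3 h4]]]; repeat split; lra.
have f2 := fin _ (measurable_strip_small2 x T) (fun p h => or_introl (or_introl h)).
have f1 := fin _ (measurable_strip_small1 x T) (fun p h => or_introl (or_intror h)).
have f3 := fin _ (measurable_strip_large x T) (fun p h => or_intror h).
have incrE : conv_mass (x + T) - conv_mass x =
    2 * fine (pi (strip_small1 x T)) + fine (pi (strip_large x T)).
  have f11 : (pi (strip_small1 x T) + pi (strip_small1 x T))%E \is a fin_num.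
    by rewrite fin_numD f1.
  have f113 : (pi (strip_small1 x T) + pi (strip_small1 x T) + pi (strip_large x T))%E
      \is a fin_num by rewrite fin_numD f11 f3.
  rewrite /conv_mass pi_conv_region_add // pi_strip_split // pi_strip_small2 //.
  by rewrite (fineD (conv_region_fin x) f113) (fineD f11 f3) (fineD f1 f1); ring.
have /andP[lo1 up1] : lo * G K <= fine (pi (strip_small1 x T)) <=
    hi1 * G K + hi2 * (G (x / 2) - G K).
  rewrite -!lee_fin !fineK // pi_strip_small1_ge ?pi_strip_small1_le //.
  - by move=> a /H1 /andP[].
  - by move=> a /H1 /andP[].
have /andP[lo3 up3] : 0 <= fine (pi (strip_large x T)) <= (G (x / 2 + T) - G (x / 2)) ^+ 2.
  by rewrite fine_ge0 ?measure_ge0 //= -lee_fin fineK // pi_strip_large_le.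
rewrite incrE; move: lo1 up1 lo3 up3.
move: (fine (pi (strip_small1 x T))) (fine (pi (strip_large x T))) => u v.
by clear; move=> *; apply/andP; split; lra.
Qed.

End ConvolutionMeasure.

Lemma is_distr0_cumulative (G : R -> R) : is_distr0 G ->
  [/\ nondecreasing G, right_continuous G & forall x, x < 0 -> G x = 0].
Proof.
move=> [mono [rc [neg _]]]; split.
- by move=> a b /RleP ab; apply/RleP; exact: mono.
- move=> x; apply/cvgrPdist_lt => e /RltP e0.
  have [d [/RltP d0 Hd]] := rc x e e0.
  near=> y.
  have xy : x < y by near: y; exact: nbhs_right_gt.
  have yd : y < x + d by near: y; apply: nbhs_right_lt; rewrite ltrDl.
  by rewrite distrC; apply/RltP; apply: Hd; split; [apply/RleP; exact: ltW|exact/RltP].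
- by move=> x /RltP; exact: neg.
Unshelve. all: end_near.
Qed.

Lemma conv_mass_half_split_bounds (G : R -> R) (G_nd : nondecreasing G)
    (G_rc : right_continuous G) (G_neg : forall x, x < 0 -> G x = 0) (T : R) :
  Rle 0 T -> half_split_bounds G (conv_mass G_nd G_rc) T.
Proof.
move=> /RleP T0 x K lo hi1 hi2 /RleP x0 [/RleP K0 /RleP Kx] /RleP lo0 /RleP h10 /RleP h20 H1 H2.
rewrite IZR_2 in Kx.
have shiftE a : x + T - a = x - a + T by ring.
have H1' a : -1 < a <= K -> lo <= G (x + T - a) - G (x - a) <= hi1.
  move=> /andP[/RltP a1 /RleP aK]; rewrite -IZR_neg1 in a1.
  by have [/RleP h1 /RleP h2] := H1 a (conj a1 aK); rewrite shiftE h1 h2.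
have H2' a : K < a <= x / 2 -> G (x + T - a) - G (x - a) <= hi2.
  move=> /andP[/RltP Ka /RleP a2]; rewrite -IZR_2 in a2.
  by have /RleP h := H2 a (conj Ka a2); rewrite shiftE.
have /andP[/RleP b1 /RleP b2] := conv_mass_increment_bounds G_nd G_rc G_neg x0 T0
  (introT andP (conj K0 Kx)) lo0 h10 h20 H1' H2'.
by rewrite /Fint IZR_2 RpowE.
Qed.

Open Scope R_scope.
Bind Scope R_scope with R.

Theorem proposition9 (T : R) (G : R -> R) :
  0 < T ->
  is_distr0 G ->
  in_L_Delta T G ->
  (exists c x0, 0 < c /\
     forall x t, x0 < x -> 0 < t <= x -> Fint G T (x + t) >= c * Fint G T x) ->
  in_S_Delta T G.
Proof.
move=> T0 HG HL [c [x0 [c0 Hc]]].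
have [G_nd G_rc G_neg] := is_distr0_cumulative HG.
split; [exact: L_Delta_unbounded_support HG HL|split; first exact: HL].
move=> eps eps0.
have [M HM] := half_split_increment_asymptotic (conv_mass G_nd G_rc) T0 HG HL c0 Hc
  (conv_mass_half_split_bounds G_nd G_rc G_neg (Rlt_le _ _ T0)) eps eps0.
exists (Rmax M 0) => x Hx.
have x_ge0 : 0 <= x := Rle_trans _ _ _ (Rmax_r M 0) Hx.
have xT_ge0 : 0 <= x + T := Rplus_le_le_0_compat _ _ x_ge0 (Rlt_le _ _ T0).
rewrite /ConvInt !(conv_cdf_conv_mass G_nd G_rc G_neg); try exact/RleP.
exact: HM (Rle_trans _ _ _ (Rmax_l M 0) Hx).
Qed.
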